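(* Let $q\ge 1$, $d=2^q$, and let $\hat H$ be a Hermitian operator on $\mathbb{C}^d$ with eigenvalues $0<\lambda_0<\lambda_1\le\cdots\le\lambda_{d-1}\le 1$ and corresponding orthonormal eigenvectors $\ket{\lambda_0},\dots,\ket{\lambda_{d-1}}$. Let $\omega=\pi/4$ and define the unitary on $\mathbb{C}^2\otimes\mathbb{C}^d$ $$\hat U=\ket{0}\bra{0}\otimes e^{i\omega\hat H}+i\,\ket{1}\bra{1}\otimes e^{-i\omega\hat H}.$$ Let $\ket{\alpha}=\sum_{j=0}^{d-1}\gamma_j\ket{\lambda_j}$ be a unit vector in $\mathbb{C}^d$, let $\ket{+}=(\ket{0}+\ket{1})/\sqrt2$, $\ket{\Psi}=\ket{+}\otimes\ket{\alpha}$, $\hat R=\hat{\mathbb 1}-2\ket{\Psi}\bra{\Psi}$, and $\hat T=\hat R\hat U\hat R\hat U^\dagger$. For $k\in\{0,1\}$ let $p_k=\|(\bra{k}\otimes\hat{\mathbb 1})\hat T\ket{\Psi}\|^2$ and $\ket{\varphi_{\mathrm{out},k}}=(\bra{k}\otimes\hat{\mathbb 1})\hat T\ket{\Psi}/\sqrt{p_k}$. For a unit vector $\ket{\psi}\in\mathbb{C}^d$ write $\Gamma_{\ket\psi}=|\braket{\lambda_0}{\psi}|^2$. Define $\mathcal W=\bra{\Psi}\hat U\ket{\Psi}$, $\tilde\lambda_j=\frac{\pi}{4}(1-\lambda_j)$, $\chi=4|\mathcal W|^2-1$, $\xi_j=|\mathcal W|-\cos\tilde\lambda_j$, and $$c_\star=4\cos\tilde\lambda_0\,(4\cos^2\tilde\lambda_0-1)\,(\cos\tilde\lambda_1-\cos\tilde\lambda_0).$$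 Then $\mathcal W=|\mathcal W|e^{i\pi/4}$ with $|\mathcal W|=\sum_j|\gamma_j|^2\cos\tilde\lambda_j$, $c_\star>0$, and, assuming $0<\Gamma_{\ket{\alpha}}<1$, for each $k\in\{0,1\}$, $$\Gamma_{\ket{\varphi_{\mathrm{out},k}}}-\Gamma_{\ket{\alpha}}=4|\mathcal W|\,\chi\,\xi_0\,|\gamma_0|^2\ \ge\ c_\star\,\Gamma_{\ket{\alpha}}\bigl(1-\Gamma_{\ket{\alpha}}\bigr)>0.$$
   Context: All operators act on finite-dimensional complex Hilbert spaces; $\bra{k}\otimes\hat{\mathbb 1}$ denotes the partial inner product with the computational-basis state $\ket{k}$ of the first (ancilla) qubit. *)

From HB Require Import structures.
From mathcomp Require Import all_boot all_order all_algebra.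
From mathcomp Require Import all_classical all_reals all_analysis.
From mathcomp Require Import complex.
Set Implicit Arguments. Unset Strict Implicit. Unset Printing Implicit Defensive.
Import Order.TTheory GRing.Theory Num.Theory.
Local Open Scope ring_scope.
Local Open Scope complex_scope.

Section QDefs.
Variable R : realType.
Local Notation C := R[i].

Definition adj m n (A : 'M[C]_(m, n)) : 'M[C]_(n, m) := (map_mx conjc A)^T.

Definition dotp n (u v : 'cV[C]_n) : C := (adj u *m v) 0 0.

Definition cabs (z : C) : R := let: a +i* b := z in Num.sqrt (a ^+ 2 + b ^+ 2).

Definition vnorm2 n (u : 'cV[C]_n) : R := \sum_i cabs (u i 0) ^+ 2.

Definition expi (t : R) : C := cos t +i* sin t.

(* e^{i t H} for a Hermitian H with orthonormal eigenbasis v and eigenvalues lam,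
   via the spectral decomposition  sum_j e^{i t lam_j} |lam_j><lam_j|. *)
Definition expiH n (lam : 'I_n -> R) (v : 'I_n -> 'cV[C]_n) (t : R) : 'M[C]_n :=
  \sum_j expi (t * lam j) *: (v j *m adj (v j)).

(* C^2 (x) C^n is identified with C^(n+n) = col_mx (|0>-block) (|1>-block),
   i.e. |0>(x)x = col_mx x 0 and |1>(x)x = col_mx 0 x.
   partial inner product <k| (x) 1 : *)
Definition braK n (k : 'I_2) (x : 'cV[C]_(n + n)) : 'cV[C]_n :=
  if nat_of_ord k == 0%N then usubmx x else dsubmx x.

Definition ketbraK n (k : 'I_2) (A : 'M[C]_n) : 'M[C]_(n + n) :=
  if nat_of_ord k == 0%N then block_mx A 0 0 0 else block_mx 0 0 0 A.

Definition plusK n (a : 'cV[C]_n) : 'cV[C]_(n + n) :=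
  col_mx ((Num.sqrt 2)^-1%:C *: a) ((Num.sqrt 2)^-1%:C *: a).

End QDefs.

(* In the eigenbasis of [H] the controlled evolution [U] is diagonal: on [|+> (x) |lam_j>]
   its two blocks contribute [e^{i pi lam_j/4}] and [i e^{-i pi lam_j/4}], whose sum is
   [2 cos(lt_j) e^{i pi/4}]; hence [W = e^{i pi/4} sum_j |gamma_j|^2 cos(lt_j)].
   Since [U U^dagger Psi = Psi], the operator [T = R U R U^dagger] maps [Psi] to
   [(4|W|^2 - 1) Psi - 2 W^* U Psi], so both blocks of [T Psi] have coordinates
   [gamma_j (chi - 2|W| e^{-+i lt_j}) / sqrt 2], of squared modulus
   [|gamma_j|^2 (chi^2 - 4 chi |W| cos(lt_j) + 4|W|^2) / 2].  Because [chi = 4|W|^2 - 1]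
   these sum to [1/2], and the ground-state weight becomes [Gamma (1 + 4 chi |W| xi_0)].
   The lower bound comes from [xi_0 >= (1 - Gamma)(cos lt_1 - cos lt_0)] (a weighted mean
   of the [cos lt_j] exceeds the smallest one by that much) together with
   [|W| >= cos lt_0 > cos(pi/4)], which bounds [|W|] and [chi] below by their values at
   [cos lt_0]. *)

From HB Require Import structures.
From mathcomp Require Import all_boot all_order all_algebra.
From mathcomp Require Import all_classical all_reals all_analysis.
From mathcomp Require Import complex.
From mathcomp Require Import ring lra.
Set Implicit Arguments. Unset Strict Implicit. Unset Printing Implicit Defensive.
Import Order.TTheory GRing.Theory Num.Theory.
(* [ring_scope] is opened last, so [x^*] is [Num.conj] and the complex unit must be
   written ['i%C]. *)
Local Open Scope complex_scope.
Local Open Scope ring_scope.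

Section ComplexScalars.
Variable R : realType.
Implicit Types (a b t x y : R) (z : R[i]).

Lemma cabsE z : (cabs z)%:C = `|z|.
Proof. by case: z => a b; rewrite normc_def. Qed.

Lemma cabs_ge0 z : 0 <= cabs z.
Proof. by case: z => a b; exact: sqrtr_ge0. Qed.

Lemma cabsM z z' : cabs (z * z') = cabs z * cabs z'.
Proof. exact: Normc.normcM. Qed.

Lemma cabs_real x : 0 <= x -> cabs x%:C = x.
Proof. by move=> x0; apply: complexI; rewrite cabsE ger0_norm ?ler0c. Qed.

Lemma conj_real x : (x%:C)^* = x%:C :> R[i].
Proof. exact: conjc_real. Qed.

Lemma sqr_cabsE z : (cabs z ^+ 2)%:C = z * z^*.
Proof. by rewrite -normCK -cabsE -rmorphXn. Qed.

Lemma mul_i_conjC : 'i%C * ('i%C)^* = 1 :> R[i].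
Proof. by rewrite -sqr_cabsE /= expr0n expr1n add0r sqrtr1 expr1n. Qed.

Lemma expiD a b : expi a * expi b = expi (a + b).
Proof. by rewrite /expi cosD sinD; simpc; congr (_ +i* _); ring. Qed.

Lemma expi0 : expi 0 = 1 :> R[i].
Proof. by rewrite /expi cos0 sin0. Qed.

Lemma mul_expiN t : expi t * expi (- t) = 1.
Proof. by rewrite expiD subrr expi0. Qed.

Lemma conj_expi t : (expi t)^* = expi (- t).
Proof. by rewrite /expi cosN sinN. Qed.

Lemma expi_pihalf : expi (pi / 2) = 'i%C :> R[i].
Proof. by rewrite /expi cos_pihalf sin_pihalf. Qed.

Lemma cabs_expi t : cabs (expi t) = 1.
Proof. by rewrite /= cos2Dsin2 sqrtr1. Qed.

Lemma expiB_add_expiD a u : expi (a - u) + expi (a + u) = (2 * cos u)%:C * expi a.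
Proof. by rewrite /expi cosB sinB cosD sinD; simpc; congr (_ +i* _); ring. Qed.

Lemma expi_add_i_expiN t :
  expi t + 'i%C * expi (- t) = (2 * cos (pi / 4 - t))%:C * expi (pi / 4).
Proof.
rewrite -expiB_add_expiD -[in LHS]expi_pihalf expiD.
by congr (expi _ + expi _); field.
Qed.

Lemma sqr_cabs_sub_expi x y t :
  cabs (x%:C - y%:C * expi t) ^+ 2 = x ^+ 2 - 2 * x * y * cos t + y ^+ 2.
Proof.
apply: complexI; rewrite sqr_cabsE /expi -!complexr0; simpc; congr (_ +i* _).
- have -> : y ^+ 2 = y ^+ 2 * (cos t ^+ 2 + sin t ^+ 2) by rewrite cos2Dsin2 mulr1.
  by ring.
- by ring.
Qed.

End ComplexScalars.

Section Phases.
Variable R : realType.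
Implicit Types l m : R.

Definition phase l := pi / 4 * (1 - l).

Lemma cos_pi4_sqr : cos (pi / 4) ^+ 2 = 2^-1 :> R.
Proof.
have : cos (pi / 4 + pi / 4) = 0 :> R.
  by rewrite -cos_pihalf; congr cos; field.
rewrite cosD -!expr2 sin2cos2 => h; lra.
Qed.

Lemma phase_ge0 l : l <= 1 -> 0 <= phase l.
Proof. by move=> l1; rewrite mulr_ge0 ?subr_ge0 // divr_ge0 // pi_ge0. Qed.

Lemma phase_lt_pi4 l : 0 < l -> phase l < pi / 4.
Proof.
move=> l0; rewrite /phase -subr_gt0 -[X in X - _]mulr1 -mulrBr opprB addrC subrK.
by rewrite mulr_gt0 // divr_gt0 // pi_gt0.
Qed.

Lemma phase_in_0pi l : 0 < l -> l <= 1 -> phase l \in `[0, pi].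
Proof.
move=> l0 l1; rewrite in_itv /= phase_ge0 //.
by apply/ltW/(lt_trans (phase_lt_pi4 l0)); have := pi_gt0 R; lra.
Qed.

Lemma cos_phase_gt0 l : 0 < l -> l <= 1 -> 0 < cos (phase l).
Proof.
move=> l0 l1; apply: cos_gt0_pihalf; have := pi_gt0 R => pi0.
have := phase_ge0 l1; have := phase_lt_pi4 l0; lra.
Qed.

Lemma cos_phase_ltr l m : 0 < l -> l < m -> m <= 1 -> cos (phase l) < cos (phase m).
Proof.
move=> l0 lm m1; rewrite ltr_cos ?phase_in_0pi ?(le_trans (ltW lm)) //.
  by rewrite ltr_pM2l ?divr_gt0 ?pi_gt0 // ltrD2l ltrN2.
by rewrite (lt_trans l0).
Qed.

Lemma cos_phase_ler l m : 0 < l -> l <= m -> m <= 1 -> cos (phase l) <= cos (phase m).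
Proof.
move=> l0; rewrite le_eqVlt => /predU1P [-> //|lm m1].
exact/ltW/cos_phase_ltr.
Qed.

Lemma four_sqr_cos_phase_gt1 l : 0 < l -> l <= 1 -> 1 < 4 * cos (phase l) ^+ 2.
Proof.
move=> l0 l1; have pi0 := pi_gt0 R.
have pi4_in : pi / 4 \in `[0, pi :> R] by rewrite in_itv /=; apply/andP; split; lra.
have cos_pi4_lt : cos (pi / 4) < cos (phase l).
  by rewrite ltr_cos ?phase_in_0pi // phase_lt_pi4.
have cos_pi4_gt0 : 0 < cos (pi / 4) :> R by apply: cos_gt0_pihalf; lra.
have : cos (pi / 4) ^+ 2 < cos (phase l) ^+ 2.
  by rewrite ltr_pXn2r ?nnegrE ?(ltW cos_pi4_gt0) ?(ltW (lt_trans cos_pi4_gt0 cos_pi4_lt)).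
by rewrite cos_pi4_sqr; lra.
Qed.

End Phases.

Section Averages.
Variables (R : realFieldType) (I : finType) (G c : I -> R) (i0 : I) (c1 : R).
Hypotheses (G_ge0 : forall j, 0 <= G j) (G_sum1 : \sum_j G j = 1).
Hypothesis c_ge : forall j, j != i0 -> c1 <= c j.

Lemma avg_sub_ge : (1 - G i0) * (c1 - c i0) <= \sum_j G j * c j - c i0.
Proof.
have -> : \sum_j G j * c j - c i0 = \sum_j G j * (c j - c i0).
  rewrite [RHS](eq_bigr (fun j => G j * c j - G j * c i0)); last by move=> j _; rewrite mulrBr.
  by rewrite sumrB -mulr_suml G_sum1 mul1r.
have -> : 1 - G i0 = \sum_(j | j != i0) G j by rewrite -G_sum1 (bigD1 i0) //= addrAC subrr add0r.
rewrite mulr_suml [X in _ <= X](bigD1 i0) //= subrr mulr0 add0r.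
by apply: ler_sum => j ji0; rewrite ler_wpM2l ?lerD2r ?c_ge.
Qed.

End Averages.

Lemma gain_ge (R : realFieldType) (g c0 c1 w : R) :
  0 <= g <= 1 -> 0 < c0 -> 1 < 4 * c0 ^+ 2 -> c0 <= c1 -> (1 - g) * (c1 - c0) <= w - c0 ->
  4 * c0 * (4 * c0 ^+ 2 - 1) * (c1 - c0) * g * (1 - g)
    <= 4 * w * (4 * w ^+ 2 - 1) * (w - c0) * g.
Proof.
case/andP=> g0 g1 c00 c0sq c01 gap.
have c0w : c0 <= w by rewrite -subr_ge0 (le_trans _ gap) // mulr_ge0 ?subr_ge0.
have sq : c0 ^+ 2 <= w ^+ 2.
  by rewrite ler_pXn2r ?nnegrE ?(ltW c00) ?(ltW (lt_le_trans c00 c0w)).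
have -> : 4 * c0 * (4 * c0 ^+ 2 - 1) * (c1 - c0) * g * (1 - g)
    = 4 * c0 * (4 * c0 ^+ 2 - 1) * ((1 - g) * (c1 - c0)) * g by ring.
apply: ler_wpM2r => //; apply: ler_pM => //.
- by apply: mulr_ge0; lra.
- by apply: mulr_ge0; lra.
- by apply: ler_pM; lra.
Qed.

Section AdjointInnerProduct.
Variable R : realType.
Local Notation C := R[i].

Lemma adjE m n (A : 'M[C]_(m, n)) i j : adj A i j = (A j i)^*.
Proof. by rewrite !mxE. Qed.

Lemma adjK m n (A : 'M[C]_(m, n)) : adj (adj A) = A.
Proof. by apply/matrixP => i j; rewrite !adjE conjCK. Qed.

Lemma adjZ m n c (A : 'M[C]_(m, n)) : adj (c *: A) = c^* *: adj A.
Proof. by apply/matrixP => i j; rewrite !(mxE, adjE) rmorphM. Qed.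

Lemma adjM m n p (A : 'M[C]_(m, n)) (B : 'M[C]_(n, p)) : adj (A *m B) = adj B *m adj A.
Proof. by rewrite /adj map_mxM trmx_mul. Qed.

Lemma adj_sum m n (I : finType) (F : I -> 'M[C]_(m, n)) :
  adj (\sum_i F i) = \sum_i adj (F i).
Proof.
by apply/matrixP => i j; rewrite adjE !summxE rmorph_sum; apply: eq_bigr => l _; rewrite adjE.
Qed.

Lemma adj_block m1 m2 n1 n2 (A : 'M[C]_(m1, n1)) (B : 'M[C]_(m1, n2))
    (D : 'M[C]_(m2, n1)) (E : 'M[C]_(m2, n2)) :
  adj (block_mx A B D E) = block_mx (adj A) (adj D) (adj B) (adj E).
Proof. by rewrite /adj map_block_mx tr_block_mx. Qed.

Lemma adj0 m n : adj (0 : 'M[C]_(m, n)) = 0.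
Proof. by apply/matrixP => i j; rewrite adjE !mxE conjC0. Qed.

Lemma dotpE n (u x : 'cV[C]_n) : dotp u x = \sum_i (u i 0)^* * x i 0.
Proof. by rewrite /dotp mxE; apply: eq_bigr => i _; rewrite adjE. Qed.

Lemma dotpC n (u x : 'cV[C]_n) : dotp u x = (dotp x u)^*.
Proof.
by rewrite !dotpE rmorph_sum; apply: eq_bigr => i _; rewrite rmorphM /= conjCK mulrC.
Qed.

Lemma dotpDr n (u x y : 'cV[C]_n) : dotp u (x + y) = dotp u x + dotp u y.
Proof. by rewrite !dotpE -big_split; apply: eq_bigr => i _; rewrite mxE mulrDr. Qed.

Lemma dotpZr n (u x : 'cV[C]_n) c : dotp u (c *: x) = c * dotp u x.
Proof. by rewrite !dotpE mulr_sumr; apply: eq_bigr => i _; rewrite mxE mulrCA. Qed.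

Lemma dotpNr n (u x : 'cV[C]_n) : dotp u (- x) = - dotp u x.
Proof. by rewrite -scaleN1r dotpZr mulN1r. Qed.

Lemma dotp_sumr n (u : 'cV[C]_n) (I : finType) (F : I -> 'cV[C]_n) :
  dotp u (\sum_i F i) = \sum_i dotp u (F i).
Proof.
rewrite dotpE; under eq_bigr do rewrite summxE mulr_sumr.
by rewrite exchange_big; apply: eq_bigr => i _; rewrite dotpE.
Qed.

Lemma dotpZl n (u x : 'cV[C]_n) c : dotp (c *: u) x = c^* * dotp u x.
Proof. by rewrite dotpC dotpZr rmorphM /= -dotpC. Qed.

Lemma dotp_col_mx n (x y x' y' : 'cV[C]_n) :
  dotp (col_mx x y) (col_mx x' y') = dotp x x' + dotp y y'.
Proof.
by rewrite !dotpE big_split_ord; congr (_ + _); apply: eq_bigr => i _;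
  rewrite ?col_mxEu ?col_mxEd.
Qed.

Lemma dotp_adjl n (A : 'M[C]_n) (x y : 'cV[C]_n) : dotp (adj A *m x) y = dotp x (A *m y).
Proof. by rewrite /dotp adjM adjK mulmxA. Qed.

Lemma vnorm2E n (x : 'cV[C]_n) : (vnorm2 x)%:C = dotp x x.
Proof.
by rewrite /vnorm2 dotpE rmorph_sum; apply: eq_bigr => i _ /=; rewrite sqr_cabsE mulrC.
Qed.

Lemma mulmx_cV_1 n (u : 'cV[C]_n) (M : 'M[C]_1) : u *m M = M 0 0 *: u.
Proof. by apply/matrixP => i k; rewrite !mxE big_ord1 !ord1 mulrC. Qed.

Lemma mulmx_projector n (u x : 'cV[C]_n) : u *m adj u *m x = dotp u x *: u.
Proof. by rewrite -mulmxA mulmx_cV_1. Qed.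

(* No hypothesis on [x]: for [x = 0] both sides vanish, as [0^-1 = 0]. *)
Lemma sqr_cabs_dotp_normalize n (u x : 'cV[C]_n) :
  cabs (dotp u ((Num.sqrt (vnorm2 x))^-1%:C *: x)) ^+ 2 = cabs (dotp u x) ^+ 2 / vnorm2 x.
Proof.
have x_ge0 : 0 <= vnorm2 x by rewrite sumr_ge0 // => i _; rewrite exprn_ge0 ?cabs_ge0.
rewrite dotpZr cabsM cabs_real ?invr_ge0 ?sqrtr_ge0 // exprMn exprVn sqr_sqrtr //.
by rewrite mulrC.
Qed.

End AdjointInnerProduct.

Section Reflector.
Variables (R : realType) (n : nat).
Local Notation C := R[i].
Implicit Types (psi x : 'cV[C]_n) (U : 'M[C]_n).

Definition reflector psi : 'M[C]_n := 1%:M - 2%:R *: (psi *m adj psi).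

Lemma reflector_mulmx psi x : reflector psi *m x = x - (2 * dotp psi x) *: psi.
Proof. by rewrite mulmxBl mul1mx -scalemxAl mulmx_projector scalerA. Qed.

Lemma reflector_commutator_mulmx U psi :
  dotp psi psi = 1 -> U *m (adj U *m psi) = psi ->
  let W := dotp psi (U *m psi) in
  reflector psi *m U *m reflector psi *m adj U *m psi
    = (4 * W^* * W - 1) *: psi - (2 * W^*) *: (U *m psi).
Proof.
move=> psi1 UU W.
have WJ : dotp psi (adj U *m psi) = W^* by rewrite dotpC dotp_adjl.
rewrite -!mulmxA [reflector psi *m (adj U *m psi)]reflector_mulmx WJ.
rewrite mulmxBr UU -scalemxAr reflector_mulmx.
rewrite dotpDr dotpNr dotpZr psi1 -/W.
apply/matrixP => i j; rewrite !mxE; ring.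
Qed.

End Reflector.

Section Eigencoordinates.
Variables (R : realType) (n : nat) (lam : 'I_n -> R) (v : 'I_n -> 'cV[R[i]]_n).
Local Notation C := R[i].
Implicit Types (a b : 'I_n -> C).

Definition comb a : 'cV[C]_n := \sum_j a j *: v j.

Lemma eq_comb a b : a =1 b -> comb a = comb b.
Proof. by move=> ab; apply: eq_bigr => j _; rewrite ab. Qed.

Lemma combZ c a : c *: comb a = comb (fun j => c * a j).
Proof. by rewrite scaler_sumr; apply: eq_bigr => j _; rewrite scalerA. Qed.

Lemma combD a b : comb a + comb b = comb (fun j => a j + b j).
Proof. by rewrite -big_split; apply: eq_bigr => j _; rewrite scalerDl. Qed.

Lemma combN a : - comb a = comb (fun j => - a j).
Proof. by rewrite -sumrN; apply: eq_bigr => j _; rewrite scaleNr. Qed.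

Lemma adj_expiH t : adj (expiH lam v t) = expiH lam v (- t).
Proof.
rewrite /expiH adj_sum; apply: eq_bigr => j _.
by rewrite adjZ adjM adjK conj_expi mulNr.
Qed.

Hypothesis v_orthonormal : forall j k, dotp (v j) (v k) = (j == k)%:R.

Lemma dotp_comb_basis j a : dotp (v j) (comb a) = a j.
Proof.
rewrite dotp_sumr (bigD1 j) //= dotpZr v_orthonormal eqxx mulr1 big1 ?addr0 // => k.
by rewrite eq_sym dotpZr v_orthonormal => /negbTE ->; rewrite mulr0.
Qed.

Lemma dotp_comb a b : dotp (comb a) (comb b) = \sum_j (a j)^* * b j.
Proof.
rewrite dotpC dotp_sumr rmorph_sum; apply: eq_bigr => j _.
by rewrite dotpZr rmorphM /= -dotpC dotp_comb_basis.
Qed.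

Lemma vnorm2_comb a : vnorm2 (comb a) = \sum_j cabs (a j) ^+ 2.
Proof.
apply: complexI; rewrite vnorm2E dotp_comb rmorph_sum.
by apply: eq_bigr => j _ /=; rewrite sqr_cabsE mulrC.
Qed.

Lemma expiH_comb t a : expiH lam v t *m comb a = comb (fun j => expi (t * lam j) * a j).
Proof.
rewrite /expiH mulmx_suml; apply: eq_bigr => j _.
by rewrite -scalemxAl mulmx_projector dotp_comb_basis scalerA.
Qed.

End Eigencoordinates.

Section ControlledBlocks.
Variables (R : realType) (n : nat).
Local Notation C := R[i].
Implicit Types (A B : 'M[C]_n) (x y : 'cV[C]_n).

Lemma ketbraK_ctrlE A B c : ketbraK 0 A + c *: ketbraK 1 B = block_mx A 0 0 (c *: B).
Proof. by rewrite /ketbraK /= scale_block_mx !scaler0 add_block_mx !addr0 !add0r. Qed.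

Lemma ctrl_mulmx_col A B c x y :
  (ketbraK 0 A + c *: ketbraK 1 B) *m col_mx x y = col_mx (A *m x) (c *: (B *m y)).
Proof. by rewrite ketbraK_ctrlE mul_block_col !mul0mx addr0 add0r scalemxAl. Qed.

Lemma adj_ctrl A B c :
  adj (ketbraK 0 A + c *: ketbraK 1 B) = ketbraK 0 (adj A) + c^* *: ketbraK 1 (adj B).
Proof. by rewrite !ketbraK_ctrlE adj_block adjZ !adj0. Qed.

End ControlledBlocks.

Section CommutatorStep.
Variables (R : realType) (n : nat) (lam : 'I_n -> R) (v : 'I_n -> 'cV[R[i]]_n).
Variable gamma : 'I_n -> R[i].
Hypothesis v_orthonormal : forall j k, dotp (v j) (v k) = (j == k)%:R.
Hypothesis gamma_normed : \sum_j cabs (gamma j) ^+ 2 = 1.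
Local Notation C := R[i].
Local Notation s := ((Num.sqrt 2)^-1 : R).
Local Notation E t := (expiH lam v t).
Local Notation Psi := (plusK (comb v gamma)).

Definition absW := \sum_j cabs (gamma j) ^+ 2 * cos (phase (lam j)).

Definition ctrlU : 'M[C]_(n + n) := ketbraK 0 (E (pi / 4)) + 'i%C *: ketbraK 1 (E (- (pi / 4))).

Let sgamma j := s%:C * gamma j.

Lemma sqr_invsqrt2 : s ^+ 2 = 2^-1.
Proof. by rewrite exprVn sqr_sqrtr. Qed.

Lemma plusK_comb : Psi = col_mx (comb v sgamma) (comb v sgamma).
Proof. by rewrite /plusK combZ. Qed.

Lemma dotp_plusK : dotp Psi Psi = 1.
Proof.
rewrite /plusK dotp_col_mx dotpZl dotpZr -vnorm2E vnorm2_comb // gamma_normed.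
rewrite conj_real -mulr2n -!rmorphM -rmorphMn mulr1 -expr2 sqr_invsqrt2.
by rewrite -mulr_natr mulVf.
Qed.

Lemma ctrlU_plusK : ctrlU *m Psi = col_mx
  (comb v (fun j => expi (pi / 4 * lam j) * sgamma j))
  (comb v (fun j => 'i%C * (expi (- (pi / 4) * lam j) * sgamma j))).
Proof. by rewrite plusK_comb ctrl_mulmx_col !expiH_comb // combZ. Qed.

Lemma ctrlU_adj_plusK : ctrlU *m (adj ctrlU *m Psi) = Psi.
Proof.
rewrite /ctrlU adj_ctrl !adj_expiH opprK plusK_comb !ctrl_mulmx_col -scalemxAr.
rewrite !expiH_comb // !combZ; congr col_mx; apply: eq_comb => j.
  by rewrite mulrA expiD mulNr subrr expi0 mul1r.
rewrite (mulrCA (expi _)) mulrA mul_i_conjC mul1r mulrA expiD.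
by rewrite mulNr subrr expi0 mul1r.
Qed.

Lemma dotp_plusK_ctrlU : dotp Psi (ctrlU *m Psi) = absW%:C * expi (pi / 4).
Proof.
rewrite ctrlU_plusK plusK_comb dotp_col_mx !dotp_comb // -big_split rmorph_sum mulr_suml.
apply: eq_bigr => j _ /=.
have -> : forall a b : C, (sgamma j)^* * (a * sgamma j) + (sgamma j)^* * ('i%C * (b * sgamma j))
    = sgamma j * (sgamma j)^* * (a + 'i%C * b) by move=> a b; ring.
rewrite mulNr expi_add_i_expiN -sqr_cabsE mulrA -rmorphM.
have -> : pi / 4 - pi / 4 * lam j = phase (lam j) by rewrite /phase; ring.
rewrite cabsM cabs_real ?invr_ge0 ?sqrtr_ge0 // exprMn sqr_invsqrt2.
by congr (_%:C * _); field.
Qed.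

Definition out_coef (th : 'I_n -> R) j :=
  sgamma j * ((4 * absW ^+ 2 - 1)%:C - (2 * absW)%:C * expi (th j)).

Lemma commutator_plusK :
  reflector Psi *m ctrlU *m reflector Psi *m adj ctrlU *m Psi
    = col_mx (comb v (out_coef (fun j => - phase (lam j)))) (comb v (out_coef (fun j => phase (lam j)))).
Proof.
rewrite reflector_commutator_mulmx ?dotp_plusK ?ctrlU_adj_plusK // dotp_plusK_ctrlU.
have WJ : (absW%:C * expi (pi / 4))^* = absW%:C * expi (- (pi / 4)).
  by rewrite rmorphM /= conj_real conj_expi.
rewrite -(mulrA 4) WJ mulrACA [expi (- _) * _]mulrC mul_expiN mulr1 -rmorphM.
rewrite ctrlU_plusK plusK_comb !scale_col_mx opp_col_mx add_col_mx !combZ !combN !combD.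
congr col_mx; apply: eq_comb => j; rewrite /out_coef.
- have <- : expi (- (pi / 4)) * expi (pi / 4 * lam j) = expi (- phase (lam j)).
    by rewrite expiD /phase; congr expi; ring.
  by rewrite !(rmorphB, rmorphM, rmorph_nat, rmorph1); ring.
- have <- : expi (- (pi / 4)) * ('i%C * expi (- (pi / 4) * lam j)) = expi (phase (lam j)).
    by rewrite -[in LHS]expi_pihalf !expiD /phase; congr expi; field.
  by rewrite !(rmorphB, rmorphM, rmorph_nat, rmorph1); ring.
Qed.

Section OutputState.
Variable th : 'I_n -> R.
Hypothesis cos_th : forall j, cos (th j) = cos (phase (lam j)).
Local Notation X := (4 * absW ^+ 2 - 1).

Lemma sqr_cabs_out_coef j : cabs (out_coef th j) ^+ 2
  = 2^-1 * cabs (gamma j) ^+ 2 * (X ^+ 2 - 4 * X * absW * cos (phase (lam j)) + 4 * absW ^+ 2).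
Proof.
rewrite /out_coef /sgamma !cabsM cabs_real ?invr_ge0 ?sqrtr_ge0 // !exprMn.
by rewrite sqr_invsqrt2 sqr_cabs_sub_expi cos_th; ring.
Qed.

Lemma vnorm2_out : vnorm2 (comb v (out_coef th)) = 2^-1.
Proof.
rewrite vnorm2_comb //; under eq_bigr do rewrite sqr_cabs_out_coef.
rewrite (eq_bigr (fun j => 2^-1 * (X ^+ 2 + 4 * absW ^+ 2) * cabs (gamma j) ^+ 2
    - 2^-1 * 4 * X * absW * (cabs (gamma j) ^+ 2 * cos (phase (lam j))))); last by move=> j _; ring.
by rewrite sumrB -!mulr_sumr gamma_normed -/absW; ring.
Qed.

Lemma Gamma_out j :
  cabs (dotp (v j) ((Num.sqrt (vnorm2 (comb v (out_coef th))))^-1%:C *: comb v (out_coef th))) ^+ 2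
    = cabs (gamma j) ^+ 2 * (1 + 4 * X * absW * (absW - cos (phase (lam j)))).
Proof.
rewrite sqr_cabs_dotp_normalize dotp_comb_basis // sqr_cabs_out_coef vnorm2_out.
by field.
Qed.

End OutputState.

Lemma Gamma_commutator k j :
  let x := braK k (reflector Psi *m ctrlU *m reflector Psi *m adj ctrlU *m Psi) in
  cabs (dotp (v j) ((Num.sqrt (vnorm2 x))^-1%:C *: x)) ^+ 2
    = cabs (gamma j) ^+ 2 * (1 + 4 * (4 * absW ^+ 2 - 1) * absW * (absW - cos (phase (lam j)))).
Proof.
rewrite /= commutator_plusK.
case: k => [[|[|//]] k2]; rewrite /braK /= ?col_mxKu ?col_mxKd Gamma_out // => i.
exact: cosN.
Qed.

Section SpectralGap.
Variables i0 i1 : 'I_n.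
Hypotheses (lam_gt0 : forall j, 0 < lam j) (lam_le1 : forall j, lam j <= 1).
Hypothesis lam01 : lam i0 < lam i1.
Hypothesis lam1_le : forall j, j != i0 -> lam i1 <= lam j.
Local Notation c j := (cos (phase (lam j))).
Local Notation g0 := (cabs (gamma i0) ^+ 2).

Lemma absW_ge0 : 0 <= absW.
Proof. by apply: sumr_ge0 => j _; rewrite mulr_ge0 ?exprn_ge0 ?cabs_ge0 ?ltW ?cos_phase_gt0. Qed.

Lemma cstar_gt0 : 0 < 4 * c i0 * (4 * c i0 ^+ 2 - 1) * (c i1 - c i0).
Proof.
have c0_gt0 := cos_phase_gt0 (lam_gt0 i0) (lam_le1 i0).
have c0_sqr := four_sqr_cos_phase_gt1 (lam_gt0 i0) (lam_le1 i0).
have c01 := cos_phase_ltr (lam_gt0 i0) lam01 (lam_le1 i1).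
by apply: mulr_gt0; [apply: mulr_gt0; [apply: mulr_gt0 |] |]; lra.
Qed.

Lemma commutator_gain_ge : 0 <= g0 <= 1 ->
  4 * c i0 * (4 * c i0 ^+ 2 - 1) * (c i1 - c i0) * g0 * (1 - g0)
    <= 4 * absW * (4 * absW ^+ 2 - 1) * (absW - c i0) * g0.
Proof.
move=> g0_in; apply: gain_ge; rewrite ?cos_phase_gt0 ?four_sqr_cos_phase_gt1 //.
  by rewrite ltW ?cos_phase_ltr.
apply: avg_sub_ge => [j|//|j ji0]; first by rewrite exprn_ge0 ?cabs_ge0.
by rewrite cos_phase_ler ?lam1_le.
Qed.

End SpectralGap.

End CommutatorStep.

Unset Implicit Arguments.
Set Strict Implicit.

Theorem proposition1 (R : realType) (q : nat) (H : 'M[R[i]]_(2 ^ q))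
  (lam : 'I_(2 ^ q) -> R) (v : 'I_(2 ^ q) -> 'cV[R[i]]_(2 ^ q))
  (alpha : 'cV[R[i]]_(2 ^ q)) (gamma : 'I_(2 ^ q) -> R[i])
  (i0 i1 : 'I_(2 ^ q)) :
  (1 <= q)%N ->
  nat_of_ord i0 = 0%N -> nat_of_ord i1 = 1%N ->
  adj H = H ->
  (forall j, H *m v j = (lam j)%:C *: v j) ->
  (forall j k, dotp (v j) (v k) = (j == k)%:R) ->
  0 < lam i0 -> lam i0 < lam i1 ->
  (forall j k : 'I_(2 ^ q), (1 <= j)%N -> (j <= k)%N -> lam j <= lam k) ->
  (forall j, lam j <= 1) ->
  alpha = \sum_j gamma j *: v j ->
  vnorm2 alpha = 1 ->
  let omega := pi / 4 in
  let U := ketbraK 0 (expiH lam v omega) + (0 +i* 1) *: ketbraK 1 (expiH lam v (- omega)) in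
  let Psi := plusK alpha in
  let Rf := 1%:M - 2%:R *: (Psi *m adj Psi) in
  let T := Rf *m U *m Rf *m adj U in
  let p := fun k : 'I_2 => vnorm2 (braK k (T *m Psi)) in
  let phi_out := fun k : 'I_2 => (Num.sqrt (p k))^-1%:C *: braK k (T *m Psi) in
  let Gamma := fun psi : 'cV[R[i]]_(2 ^ q) => cabs (dotp (v i0) psi) ^+ 2 in
  let W := dotp Psi (U *m Psi) in
  let absW := cabs W in
  let lt := fun j => pi / 4 * (1 - lam j) in
  let chi := 4%:R * absW ^+ 2 - 1 in
  let xi := fun j => absW - cos (lt j) in
  let cstar := 4%:R * cos (lt i0) * (4%:R * cos (lt i0) ^+ 2 - 1)
                 * (cos (lt i1) - cos (lt i0)) in
  [/\ W = absW%:C * expi (pi / 4),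
      absW = \sum_j cabs (gamma j) ^+ 2 * cos (lt j),
      0 < cstar &
      (0 < Gamma alpha < 1 ->
       forall k : 'I_2,
         Gamma (phi_out k) - Gamma alpha
           = 4%:R * absW * chi * xi i0 * cabs (gamma i0) ^+ 2
         /\ cstar * Gamma alpha * (1 - Gamma alpha)
              <= 4%:R * absW * chi * xi i0 * cabs (gamma i0) ^+ 2
         /\ 0 < cstar * Gamma alpha * (1 - Gamma alpha))].
Proof.
(* [H] enters the statement only through its spectral data [lam] and [v]. *)
move=> _ i0_0 i1_1 _ _ v_orth lam0_gt0 lam01 lam_mono lam_le1 -> alpha_norm
  omega U Psi Rf T p phi_out Gamma W absW' lt chi xi cstar.
have gamma_normed : \sum_j cabs (gamma j) ^+ 2 = 1 by rewrite -alpha_norm vnorm2_comb.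
have lam1_le j : j != i0 -> lam i1 <= lam j.
  move=> ji0; apply: lam_mono; rewrite ?i1_1 // lt0n.
  by apply: contra ji0 => /eqP j0; apply/eqP/val_inj; rewrite /= j0 i0_0.
have lam_gt0 j : 0 < lam j.
  have [-> //|ji0] := eqVneq j i0.
  exact: lt_le_trans (lt_trans lam0_gt0 lam01) (lam1_le j ji0).
have W_eq : W = (absW lam gamma)%:C * expi (pi / 4) := dotp_plusK_ctrlU lam gamma v_orth.
have absWE : absW' = absW lam gamma.
  by rewrite /absW' W_eq cabsM cabs_real ?absW_ge0 // cabs_expi mulr1.
have Gamma_alpha : Gamma (comb v gamma) = cabs (gamma i0) ^+ 2.
  by rewrite /Gamma dotp_comb_basis.
split => //.
- by rewrite absWE.
- exact: cstar_gt0.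
rewrite Gamma_alpha => /andP [g0_gt0 g0_lt1] k.
rewrite /Gamma /phi_out /p /T (Gamma_commutator lam v_orth gamma_normed k i0) /chi /xi absWE.
split; first by ring.
split; first by rewrite commutator_gain_ge ?ltW.
apply: mulr_gt0; last by rewrite subr_gt0.
exact: mulr_gt0 (cstar_gt0 _ _ _) g0_gt0.
Qed.
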